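(* Let $S$ be an MPD-semigroup in $\mathbb N^d$. Then every Frobenius element of $S$ is a pseudo-Frobenius element of $S$, i.e. $\mathrm{F}(S)\subseteq\mathrm{PF}(S)$.
   Context: $S$ is the submonoid of $\mathbb N^d$ generated by finitely many $\mathbf a_1,\dots,\mathbf a_n$; it is an MPD-semigroup if, for a field $\Bbbk$, $\mathrm{depth}\,\Bbbk[S]=1$ as a module over $\Bbbk[x_1,\dots,x_n]$ via $x_i\mapsto\chi^{\mathbf a_i}$ (i.e. projective dimension $n-1$). $\mathrm{pos}(S)=\{\sum_i\lambda_i\mathbf a_i:\lambda_i\in\mathbb Q_{\ge0}\}$, $\mathcal H(S)=(\mathrm{pos}(S)\setminus S)\cap\mathbb N^d$, $\mathrm{PF}(S)=\{\mathbf a\in\mathcal H(S):\mathbf a+(S\setminus\{0\})\subseteq S\}$. A term order on $\mathbb N^d$ is a total order compatible with addition having $0$ as least element. $\mathbf f\in\mathcal H(S)$ is a Frobenius element of $S$ if $\mathbf f=\max_\prec\mathcal H(S)$ for some term order $\prec$ on $\mathbb N^d$; $\mathrm F(S)$ is the set of Frobenius elements. *)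

From HB Require Import structures.
From mathcomp Require Import all_boot all_order all_algebra.
From mathcomp Require Import mpoly.
Set Implicit Arguments. Unset Strict Implicit. Unset Printing Implicit Defensive.
Import Order.TTheory GRing.Theory Num.Theory.
Local Open Scope ring_scope.

(* Points of N^d are represented by multinomials 'X_{1..d}
   (d-tuples of naturals, with componentwise addition (_ + _)%MM and zero 0%MM).
   The semigroup S is given by generators a : 'I_n -> 'X_{1..d}. *)

Definition inS (d n : nat) (a : 'I_n -> 'X_{1..d}) (v : 'X_{1..d}) : Prop :=
  exists c : 'I_n -> nat, forall j : 'I_d, v j = (\sum_(i < n) c i * a i j)%N.

Definition inPos (d n : nat) (a : 'I_n -> 'X_{1..d}) (v : 'X_{1..d}) : Prop :=
  exists l : 'I_n -> rat, (forall i, 0 <= l i) /\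
    forall j : 'I_d, (v j)%:R = \sum_(i < n) l i * (a i j)%:R :> rat.

Definition inH (d n : nat) (a : 'I_n -> 'X_{1..d}) (v : 'X_{1..d}) : Prop :=
  inPos a v /\ ~ inS a v.

Definition isPF (d n : nat) (a : 'I_n -> 'X_{1..d}) (f : 'X_{1..d}) : Prop :=
  inH a f /\ forall s, inS a s -> s <> 0%MM -> inS a (f + s)%MM.

Definition term_order (d : nat) (le : 'X_{1..d} -> 'X_{1..d} -> Prop) : Prop :=
  (forall u, le u u) /\
  (forall u v, le u v -> le v u -> u = v) /\
  (forall u v w, le u v -> le v w -> le u w) /\
  (forall u v, le u v \/ le v u) /\
  (forall u v w, le u v -> le (u + w)%MM (v + w)%MM) /\
  (forall u, le 0%MM u).

Definition isFrobenius (d n : nat) (a : 'I_n -> 'X_{1..d}) (f : 'X_{1..d}) : Prop :=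
  exists le, term_order le /\ inH a f /\ forall h, inH a h -> le h f.

(* k[S] = span of monomials t^s, s \in S, inside k[t_1..t_d] *)
Definition inkS (k : fieldType) (d n : nat) (a : 'I_n -> 'X_{1..d})
  (p : {mpoly k[d]}) : Prop :=
  forall m, m \in msupp p -> inS a m.

Definition phiS (k : fieldType) (d n : nat) (a : 'I_n -> 'X_{1..d})
  (r : {mpoly k[n]}) : {mpoly k[d]} :=
  mmap (fun c : k => c%:MP) (fun i => 'X_[a i]) r.

Definition actS (k : fieldType) (d n : nat) (a : 'I_n -> 'X_{1..d})
  (r : {mpoly k[n]}) (p : {mpoly k[d]}) : {mpoly k[d]} :=
  phiS a r * p.

Definition inIM (k : fieldType) (d n : nat) (a : 'I_n -> 'X_{1..d})
  (fs : seq {mpoly k[n]}) (p : {mpoly k[d]}) : Prop :=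
  exists ms : 'I_(size fs) -> {mpoly k[d]},
    (forall i, inkS a (ms i)) /\
    p = \sum_(i < size fs) actS a (nth 0 fs i) (ms i).

(* fs is a k[S]-regular sequence contained in the homogeneous maximal ideal
   m = (x_1, ..., x_n) of k[x_1..x_n] *)
Definition regular_seq (k : fieldType) (d n : nat) (a : 'I_n -> 'X_{1..d})
  (fs : seq {mpoly k[n]}) : Prop :=
  [/\ (forall f, f \in fs -> f@_0%MM = 0),
      (forall j, (j < size fs)%N -> forall p, inkS a p ->
          inIM a (take j fs) (actS a (nth 0 fs j) p) -> inIM a (take j fs) p)
    & (exists p, inkS a p /\ ~ inIM a fs p)].

(* depth k[S] = 1 (as a k[x_1..x_n]-module, w.r.t. (x_1..x_n)) *)
Definition depth_one (k : fieldType) (d n : nat) (a : 'I_n -> 'X_{1..d}) : Prop :=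
  (exists f : {mpoly k[n]}, regular_seq a [:: f]) /\
  ~ (exists f g : {mpoly k[n]}, regular_seq a [:: f; g]).

Definition MPD (k : fieldType) (d n : nat) (a : 'I_n -> 'X_{1..d}) : Prop :=
  depth_one k a.

(* If s is a nonzero element of S and f is the maximum of H(S) for a term
   order, then f + s lies in pos(S) and is strictly larger than f, so it cannot
   be a hole: f + s belongs to S. *)
From HB Require Import structures.
From mathcomp Require Import all_boot all_order all_algebra.
From mathcomp Require Import mpoly.
From Stdlib Require Import Classical.
Import Order.TTheory GRing.Theory Num.Theory.
Local Open Scope ring_scope.

Lemma inPosD (d n : nat) (a : 'I_n -> 'X_{1..d}) (f s : 'X_{1..d}) :
  inPos a f -> inS a s -> inPos a (f + s)%MM.
Proof.
move=> [l [l_ge0 def_f]] [c def_s].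
exists (fun i => l i + (c i)%:R); split=> [i | j].
  by rewrite addr_ge0 // ler0n.
rewrite mnmDE natrD def_f def_s natr_sum -big_split /=.
by apply: eq_bigr => i _; rewrite natrM mulrDl.
Qed.

Section TermOrder.

Variables (d : nat) (le : 'X_{1..d} -> 'X_{1..d} -> Prop).
Hypothesis le_term_order : term_order le.

Lemma term_order_le_addr (u v : 'X_{1..d}) : le u (u + v)%MM.
Proof.
have [_ [_ [_ [_ [le_add le0]]]]] := le_term_order.
by have := le_add _ _ u (le0 v); rewrite add0m addmC.
Qed.

Lemma term_order_addr_le_eq0 (u v : 'X_{1..d}) :
  le (u + v)%MM u -> v = 0%MM.
Proof.
have [_ [le_anti _]] := le_term_order.
move=> le_uv_u; apply: (@addmI _ u); rewrite addm0.
exact: le_anti le_uv_u (term_order_le_addr u v).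
Qed.

End TermOrder.

Lemma Frobenius_addS (d n : nat) (a : 'I_n -> 'X_{1..d}) (f s : 'X_{1..d}) :
  isFrobenius a f -> inS a s -> s <> 0%MM -> inS a (f + s)%MM.
Proof.
move=> [le [le_term_order [[Pos_f _] f_max]]] S_s s_neq0.
apply: NNPP => notS_fs; apply: s_neq0.
apply: (term_order_addr_le_eq0 _ _ le_term_order f); apply: f_max.
by split; first exact: inPosD.
Qed.

Theorem lemma3p2 (k : fieldType) (d n : nat) (a : 'I_n -> 'X_{1..d}) :
  MPD k a -> forall f : 'X_{1..d}, isFrobenius a f -> isPF a f.
Proof.
move=> _ f Frob_f; split=> [| s S_s s_neq0].
- by have [le [_ []]] := Frob_f.
- exact: Frobenius_addS.
Qed.
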